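(* There exists an absolute constant $C_1>0$ such that for every $\delta_0>0$ the following holds: if $\|\mathcal T-\mathcal S\|_{\mathrm{op}}<\delta_0$ and $x\in\mathbb C^n$ satisfies $\|\nabla g(x^+)\|\ge C_1\delta_0 c\,(\|x\|+\|x^\natural\|)^3$, then $\nabla f(x^+)\neq0$.
   Context: Let $n,m\ge 1$, $a_1,\dots,a_m\in\mathbb C^n$ and $x^\natural\in\mathbb C^n$ with $x^\natural\neq0$. For $a,b\in\mathbb C^n$ write $\langle a,b\rangle=\sum_{j}a_j\overline{b_j}$ and let $\|\cdot\|$ be the Euclidean norm. Let $y_i=|\langle a_i,x^\natural\rangle|^2$. For $v\in\mathbb C^n$ put $v^+=(\mathrm{Re}\,v,\mathrm{Im}\,v)\in\mathbb R^{2n}$ and $v^-=(-\mathrm{Im}\,v,\mathrm{Re}\,v)$; $x$ and $x^+$ always correspond. Define $f:\mathbb R^{2n}\to\mathbb R$ by $f(x^+)=\sum_{i=1}^m\big(|\langle a_i,x\rangle|^2-y_i\big)^2$. Fix $\sigma>0$ (in the paper, $\sigma^2=\mathrm{Var}((a_i^+)_1)$ for random measurement vectors), set $c=m\sigma^4$, and define $g:\mathbb R^{2n}\to\mathbb R$ by $g(x^+)=8c\left(\|x\|^4+\|x^\natural\|^4-|\langle x,x^\natural\rangle|^2-\|x\|^2\|x^\natural\|^2\right)$. Gradients are with respect to $x^+\in\mathbb R^{2n}$. Define the order-4 tensors on $\mathbb R^{2n}$: $\mathcal T=\frac1c\sum_{i=1}^m(a_i^+)^{\otimes 4}$ and $\mathcal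 S_{i_1i_2i_3i_4}=\mathbf 1_{i_1=i_2,\,i_3=i_4}+\mathbf 1_{i_1=i_3,\,i_2=i_4}+\mathbf 1_{i_1=i_4,\,i_2=i_3}$, and $\|\mathcal R\|_{\mathrm{op}}=\sup\{\langle \mathcal R,u_1\otimes u_2\otimes u_3\otimes u_4\rangle:\ u_j\in\mathbb R^{2n},\ \|u_1\|\|u_2\|\|u_3\|\|u_4\|=1\}$ (tensor inner product = sum of entrywise products). *)

From HB Require Import structures.
From mathcomp Require Import all_boot all_order all_algebra.
From mathcomp Require Import all_classical all_reals all_analysis.
From mathcomp Require Import complex.
Set Implicit Arguments. Unset Strict Implicit. Unset Printing Implicit Defensive.
Import Order.TTheory GRing.Theory Num.Theory.
Import numFieldNormedType.Exports.
Local Open Scope ring_scope.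
Local Open Scope classical_set_scope.

Section PhaseRetrieval.
Variable R : realType.

Definition cvec (n : nat) := 'rV[R[i]]_n.

Definition cinner n (a b : cvec n) : R[i] := \sum_(j < n) a 0 j * conjc (b 0 j).

Definition cabs (z : R[i]) : R := Num.sqrt ((@complex.Re R z) ^+ 2 + (@complex.Im R z) ^+ 2).

Definition cnorm n (x : cvec n) : R := Num.sqrt (\sum_(j < n) cabs (x 0 j) ^+ 2).

Definition enorm N (v : 'rV[R]_N) : R := Num.sqrt (\sum_(j < N) v 0 j ^+ 2).

Definition vplus n (v : cvec n) : 'rV[R]_(n + n) :=
  row_mx (\row_(j < n) @complex.Re R (v 0 j)) (\row_(j < n) @complex.Im R (v 0 j)).

Definition vofplus n (u : 'rV[R]_(n + n)) : cvec n :=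
  \row_(j < n) Complex (lsubmx u 0 j) (rsubmx u 0 j).

Definition ymeas n m (a : 'I_m -> cvec n) (xnat : cvec n) (i : 'I_m) : R :=
  cabs (cinner (a i) xnat) ^+ 2.

Definition fobj n m (a : 'I_m -> cvec n) (xnat : cvec n) (u : 'rV[R]_(n + n)) : R :=
  \sum_(i < m) (cabs (cinner (a i) (vofplus u)) ^+ 2 - ymeas a xnat i) ^+ 2.

Definition cconst (m : nat) (sigma : R) : R := m%:R * sigma ^+ 4.

Definition gobj n (m : nat) (sigma : R) (xnat : cvec n) (u : 'rV[R]_(n + n)) : R :=
  let x := vofplus u in
  8 * cconst m sigma * (cnorm x ^+ 4 + cnorm xnat ^+ 4
     - cabs (cinner x xnat) ^+ 2 - cnorm x ^+ 2 * cnorm xnat ^+ 2).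

Definition grad N (F : 'rV[R]_N -> R) (u : 'rV[R]_N) : 'rV[R]_N :=
  \row_(j < N) ('D_(delta_mx 0 j) F u).

Definition tensor4 N := 'I_N -> 'I_N -> 'I_N -> 'I_N -> R.

Definition tsub N (A B : tensor4 N) : tensor4 N :=
  fun i1 i2 i3 i4 => A i1 i2 i3 i4 - B i1 i2 i3 i4.

Definition tensT n m (a : 'I_m -> cvec n) (sigma : R) : tensor4 (n + n) :=
  fun i1 i2 i3 i4 => (cconst m sigma)^-1 *
    \sum_(i < m) (vplus (a i) 0 i1 * vplus (a i) 0 i2 * vplus (a i) 0 i3 * vplus (a i) 0 i4).

Definition tensS N : tensor4 N :=
  fun i1 i2 i3 i4 =>
    ((i1 == i2) && (i3 == i4))%:R + ((i1 == i3) && (i2 == i4))%:R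
    + ((i1 == i4) && (i2 == i3))%:R.

Definition tpair N (A : tensor4 N) (u1 u2 u3 u4 : 'rV[R]_N) : R :=
  \sum_(i1 < N) \sum_(i2 < N) \sum_(i3 < N) \sum_(i4 < N)
     A i1 i2 i3 i4 * u1 0 i1 * u2 0 i2 * u3 0 i3 * u4 0 i4.

Definition opnorm N (A : tensor4 N) : R :=
  sup [set t : R | exists u1 u2 u3 u4 : 'rV[R]_N,
         enorm u1 * enorm u2 * enorm u3 * enorm u4 = 1 /\ t = tpair A u1 u2 u3 u4].

End PhaseRetrieval.

From HB Require Import structures.
From mathcomp Require Import all_boot all_order all_algebra.
From mathcomp Require Import all_classical all_reals all_analysis.
From mathcomp Require Import complex.
From mathcomp Require Import ring lra.
Import Order.TTheory GRing.Theory Num.Theory.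
Import numFieldNormedType.Exports.
Local Open Scope ring_scope.
Local Open Scope classical_set_scope.
Set Implicit Arguments. Unset Strict Implicit.

(* Both gradients are [4 c] times the same cubic expression [tgrad], built from the tensor
   [T] for [f] and from [S] for [g]. At a critical point [u] of [f] one thus gets
   [|grad g(u)|^2 = <grad g(u) - grad f(u), grad g(u)> = - 4 c tgrad (T - S) u (grad g(u))],
   and bounding each of the eight tensor pairings by the operator norm gives
   [|grad g(u)| <= 16 c |T - S|_op (|u|^2 + |x^nat|^2) |u| < 16 delta0 c (|u| + |x^nat|)^3],
   so [C1 = 16] works. *)

Section QuarticDerivative.
Variable R : realType.

Lemma derive_quartic N (F : 'rV[R]_N -> R) (u e : 'rV[R]_N) (b p2 p3 p4 : R) :
  (forall h : R, F (u + h *: e) = F u + h * b + h ^+ 2 * p2 + h ^+ 3 * p3 + h ^+ 4 * p4) ->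
  'D_e F u = b.
Proof.
move=> Fexp; apply: cvg_lim => //.
pose q h : R := b + h * (p2 + h * (p3 + h * p4)).
have q_quotient : {near dnbhs (0 : R),
    q =1 fun h => h^-1 *: ((F \o shift u) (h *: e) - F u)}.
  near=> h; have h0 : h != 0 by near: h; exact: nbhs_dnbhs_neq.
  by rewrite /= [h *: e + u]addrC Fexp /GRing.scale /= /q; field.
apply: (cvg_trans (near_eq_cvg q_quotient)).
have q0 : q @ nbhs (0 : R) --> q 0.
  do 3![apply: cvgD; first exact: cvg_cst; apply: cvgM; first exact: cvg_id].
  exact: cvg_cst.
rewrite /q mul0r addr0 in q0.
exact: cvg_within_filter q0.
Unshelve. all: by end_near.
Qed.

End QuarticDerivative.

Section InnerProduct.
Variables (R : realType) (K : nat).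
Implicit Types (p q r : 'rV[R]_K) (k : R).

Definition dot p q : R := \sum_(j < K) p 0 j * q 0 j.

Lemma dotC p q : dot p q = dot q p.
Proof. by apply: eq_bigr => j _; rewrite mulrC. Qed.

Lemma dotDZr p q r k : dot p (k *: q + r) = k * dot p q + dot p r.
Proof. by rewrite /dot mulr_sumr -big_split; apply: eq_bigr => j _; rewrite !mxE /=; ring. Qed.

Lemma dotDZl p q r k : dot (k *: q + r) p = k * dot q p + dot r p.
Proof. by rewrite dotC dotDZr ![dot p _]dotC. Qed.

Lemma dotZl p q k : dot (k *: p) q = k * dot p q.
Proof. by rewrite /dot mulr_sumr; apply: eq_bigr => j _; rewrite mxE mulrA. Qed.

Lemma dotNl p q : dot (- p) q = - dot p q.
Proof. by rewrite -scaleN1r dotZl mulN1r. Qed.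

Lemma dotNr p q : dot p (- q) = - dot p q.
Proof. by rewrite dotC dotNl dotC. Qed.

Lemma dot_ge0 p : 0 <= dot p p.
Proof. by apply: sumr_ge0 => j _; rewrite -expr2 sqr_ge0. Qed.

Lemma enormE p : enorm p = Num.sqrt (dot p p).
Proof. by congr Num.sqrt; apply: eq_bigr => j _; rewrite expr2. Qed.

Lemma enorm_sqr p : enorm p ^+ 2 = dot p p.
Proof. by rewrite enormE sqr_sqrtr // dot_ge0. Qed.

Lemma enorm_ge0 p : 0 <= enorm p.
Proof. by rewrite enormE sqrtr_ge0. Qed.

Lemma enormZ p k : enorm (k *: p) = `|k| * enorm p.
Proof. by rewrite !enormE dotZl dotC dotZl mulrA -expr2 sqrtrM ?sqr_ge0 // sqrtr_sqr. Qed.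

Lemma enorm_eq0 p : (enorm p == 0) = (p == 0).
Proof.
apply/idP/eqP => [|->]; last by rewrite enormE /dot big1 ?sqrtr0 // => j _; rewrite mxE mul0r.
rewrite enormE sqrtr_eq0 le_eqVlt ltNge dot_ge0 orbF psumr_eq0 => [/allP p0|j _]; last first.
  by rewrite -expr2 sqr_ge0.
by apply/rowP => j; have := p0 j (mem_index_enum _); rewrite mxE -expr2 sqrf_eq0 => /eqP.
Qed.

Lemma normr_coord_le_enorm p j : `|p 0 j| <= enorm p.
Proof.
rewrite /enorm -sqrtr_sqr ler_sqrt; last by apply: sumr_ge0 => i _; rewrite sqr_ge0.
by rewrite (bigD1 j) //= lerDl; apply: sumr_ge0 => i _; exact: sqr_ge0.
Qed.

Lemma linear_sum_delta (L : 'rV[R]_K -> R) :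
  (forall k p q, L (k *: p + q) = k * L p + L q) ->
  forall p, L p = \sum_(j < K) p 0 j * L (delta_mx 0 j).
Proof.
move=> Llin p; have L0 : L 0 = 0 by have := Llin 1 0 0; rewrite scaler0 addr0 mul1r; lra.
rewrite {1}(row_sum_delta p).
by apply: (big_rec2 (fun v t => L v = t)) => // j v t _ <-; rewrite Llin.
Qed.

Lemma dot_grad (F : 'rV[R]_K -> R) u (L : 'rV[R]_K -> R) :
  (forall e, 'D_e F u = L e) -> (forall k p q, L (k *: p + q) = k * L p + L q) ->
  forall e, dot (grad F u) e = L e.
Proof.
move=> DF Llin e; rewrite (linear_sum_delta Llin) dotC.
by apply: eq_bigr => j _; rewrite /grad mxE DF.
Qed.

End InnerProduct.

Lemma dot_row_mx (R : realType) K1 K2 (p1 q1 : 'rV[R]_K1) (p2 q2 : 'rV[R]_K2) :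
  dot (row_mx p1 p2) (row_mx q1 q2) = dot p1 q1 + dot p2 q2.
Proof.
by rewrite /dot big_split_ord; congr (_ + _); apply: eq_bigr => j _;
  rewrite ?row_mxEl ?row_mxEr.
Qed.

Section Realification.
Variables (R : realType) (n : nat).
Local Notation N := (n + n)%N.
Local Notation Re := (@complex.Re R).
Local Notation Im := (@complex.Im R).
Implicit Types (p q : 'rV[R]_N) (x : cvec R n).

(* Multiplication by the imaginary unit, read on x^+: [jrot (vplus x) = x^-]. *)
Definition jrot p : 'rV[R]_N := row_mx (- rsubmx p) (lsubmx p).

Lemma jrotDZ p q k : jrot (k *: p + q) = k *: jrot p + jrot q.
Proof. by rewrite /jrot !linearD !linearZ /= scale_row_mx add_row_mx scalerN. Qed.

Lemma dot_jrot p q : dot (jrot p) (jrot q) = dot p q.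
Proof.
by rewrite /jrot dot_row_mx -[in RHS](hsubmxK p) -[in RHS](hsubmxK q) dot_row_mx
  dotNl dotNr opprK addrC.
Qed.

Lemma dot_jrotl p q : dot (jrot p) q = - dot p (jrot q).
Proof.
rewrite /jrot -[in LHS](hsubmxK q) -[in RHS](hsubmxK p) !dot_row_mx dotNl dotNr.
by rewrite (dotC (rsubmx p)) (dotC (lsubmx p)) opprD opprK addrC.
Qed.

Lemma dot_jrot_id p : dot p (jrot p) = 0.
Proof. by have := dot_jrotl p p; rewrite dotC => /eqP; rewrite -addr_eq0 -mulr2n mulrn_eq0 => /eqP. Qed.

Lemma enorm_jrot p : enorm (jrot p) = enorm p.
Proof. by rewrite !enormE dot_jrot. Qed.

Lemma Re_sum (I : Type) (r : seq I) (F : I -> R[i]) :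
  Re (\sum_(i <- r) F i) = \sum_(i <- r) Re (F i).
Proof. by apply: (big_morph _ (id1 := 0)) => // [[? ?] [? ?]]. Qed.

Lemma Im_sum (I : Type) (r : seq I) (F : I -> R[i]) :
  Im (\sum_(i <- r) F i) = \sum_(i <- r) Im (F i).
Proof. by apply: (big_morph _ (id1 := 0)) => // [[? ?] [? ?]]. Qed.

Lemma Re_cinner (a x : cvec R n) : Re (cinner a x) = dot (vplus a) (vplus x).
Proof.
rewrite /cinner Re_sum /vplus dot_row_mx /dot -big_split.
by apply: eq_bigr => j _; rewrite !mxE; case: (a 0 j) => ? ?; case: (x 0 j) => ? ? /=; ring.
Qed.

Lemma Im_cinner (a x : cvec R n) : Im (cinner a x) = dot (vplus a) (jrot (vplus x)).
Proof.
rewrite /cinner Im_sum /jrot /vplus row_mxKl row_mxKr dot_row_mx /dot -big_split.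
by apply: eq_bigr => j _; rewrite !mxE; case: (a 0 j) => ? ?; case: (x 0 j) => ? ? /=; ring.
Qed.

Lemma cabs_sqr (w : R[i]) : cabs w ^+ 2 = Re w ^+ 2 + Im w ^+ 2.
Proof. by rewrite /cabs sqr_sqrtr // addr_ge0 // sqr_ge0. Qed.

Lemma cabs_cinner_sqr (a x : cvec R n) : cabs (cinner a x) ^+ 2 =
  dot (vplus a) (vplus x) ^+ 2 + dot (vplus a) (jrot (vplus x)) ^+ 2.
Proof. by rewrite cabs_sqr Re_cinner Im_cinner. Qed.

Lemma vofplusK : cancel (@vofplus R n) (@vplus R n).
Proof.
by move=> p; rewrite /vplus /vofplus -[RHS]hsubmxK; congr row_mx; apply/rowP => j; rewrite !mxE.
Qed.

Lemma vplusK : cancel (@vplus R n) (@vofplus R n).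
Proof.
move=> x; apply/rowP => j; rewrite /vofplus /vplus mxE row_mxKl row_mxKr !mxE.
by case: (x 0 j).
Qed.

Lemma cnorm_enorm x : cnorm x = enorm (vplus x).
Proof.
rewrite /cnorm /enorm /vplus big_split_ord /=.
rewrite -big_split; congr Num.sqrt.
by apply: eq_bigr => j _; rewrite row_mxEl row_mxEr !mxE cabs_sqr.
Qed.

Lemma enorm_vplus_gt0 x : x != 0 -> 0 < enorm (vplus x).
Proof.
move=> x0; rewrite lt_def enorm_ge0 andbT enorm_eq0.
apply: contra x0 => /eqP vx0; rewrite -[x]vplusK vx0; apply/eqP/rowP => j.
by rewrite !mxE /=.
Qed.

End Realification.

Section Tensors.
Variables (R : realType) (K : nat).
Implicit Types (D : tensor4 R K) (p q r : 'rV[R]_K).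

Lemma tpair_sub (D E : tensor4 R K) (p1 p2 p3 p4 : 'rV[R]_K) :
  tpair (tsub D E) p1 p2 p3 p4 = tpair D p1 p2 p3 p4 - tpair E p1 p2 p3 p4.
Proof.
rewrite /tpair -sumrB; apply: eq_bigr => i1 _; rewrite -sumrB; apply: eq_bigr => i2 _.
rewrite -sumrB; apply: eq_bigr => i3 _; rewrite -sumrB; apply: eq_bigr => i4 _.
by rewrite /tsub; ring.
Qed.

Lemma tpairDZ4 D (p1 p2 p3 : 'rV[R]_K) q r k :
  tpair D p1 p2 p3 (k *: q + r) = k * tpair D p1 p2 p3 q + tpair D p1 p2 p3 r.
Proof.
rewrite /tpair mulr_sumr -big_split; apply: eq_bigr => i1 _.
rewrite mulr_sumr -big_split; apply: eq_bigr => i2 _.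
rewrite mulr_sumr -big_split; apply: eq_bigr => i3 _.
by rewrite mulr_sumr -big_split; apply: eq_bigr => i4 _; rewrite !mxE /=; ring.
Qed.

Lemma tpairZ1 D (p1 p2 p3 p4 : 'rV[R]_K) k : tpair D (k *: p1) p2 p3 p4 = k * tpair D p1 p2 p3 p4.
Proof.
rewrite /tpair mulr_sumr; apply: eq_bigr => i1 _; rewrite mulr_sumr; apply: eq_bigr => i2 _.
rewrite mulr_sumr; apply: eq_bigr => i3 _; rewrite mulr_sumr; apply: eq_bigr => i4 _.
by rewrite !mxE; ring.
Qed.

Lemma tpairZ (k : R) D (p1 p2 p3 p4 : 'rV[R]_K) :
  tpair (fun i1 i2 i3 i4 => k * D i1 i2 i3 i4) p1 p2 p3 p4 = k * tpair D p1 p2 p3 p4.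
Proof.
rewrite /tpair mulr_sumr; apply: eq_bigr => i1 _; rewrite mulr_sumr; apply: eq_bigr => i2 _.
rewrite mulr_sumr; apply: eq_bigr => i3 _; rewrite mulr_sumr; apply: eq_bigr => i4 _.
by rewrite !mulrA.
Qed.

Lemma tpair_sum m (G : 'I_m -> tensor4 R K) (p1 p2 p3 p4 : 'rV[R]_K) :
  tpair (fun i1 i2 i3 i4 => \sum_(i < m) G i i1 i2 i3 i4) p1 p2 p3 p4
  = \sum_(i < m) tpair (G i) p1 p2 p3 p4.
Proof.
rewrite /tpair [RHS]exchange_big; apply: eq_bigr => i1 _.
rewrite [RHS]exchange_big; apply: eq_bigr => i2 _.
rewrite [RHS]exchange_big; apply: eq_bigr => i3 _.
by rewrite [RHS]exchange_big; apply: eq_bigr => i4 _; rewrite !mulr_suml.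
Qed.

Lemma tpair_rank1 (v p1 p2 p3 p4 : 'rV[R]_K) :
  tpair (fun i1 i2 i3 i4 => v 0 i1 * v 0 i2 * v 0 i3 * v 0 i4) p1 p2 p3 p4
  = dot v p1 * dot v p2 * dot v p3 * dot v p4.
Proof.
rewrite /tpair /dot -!mulrA mulr_suml; apply: eq_bigr => i1 _.
rewrite mulr_suml mulr_sumr; apply: eq_bigr => i2 _.
rewrite mulr_suml !mulr_sumr; apply: eq_bigr => i3 _.
by rewrite !mulr_sumr; apply: eq_bigr => i4 _; ring.
Qed.

Lemma sum_delta_mul (j : 'I_K) (F : 'I_K -> R) : \sum_(i < K) (j == i)%:R * F i = F j.
Proof.
rewrite (bigD1 j) //= eqxx mul1r big1 ?addr0 // => i /negbTE.
by rewrite eq_sym => ->; rewrite mul0r.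
Qed.

Lemma tpair_tensS (p1 p2 p3 p4 : 'rV[R]_K) : tpair (@tensS R K) p1 p2 p3 p4
  = dot p1 p2 * dot p3 p4 + dot p1 p3 * dot p2 p4 + dot p1 p4 * dot p2 p3.
Proof.
have tensS_mulr (i1 i2 i3 i4 : 'I_K) : @tensS R K i1 i2 i3 i4 * p4 0 i4 =
    (i1 == i2)%:R * ((i3 == i4)%:R * p4 0 i4) + (i1 == i3)%:R * ((i2 == i4)%:R * p4 0 i4)
    + (i2 == i3)%:R * ((i1 == i4)%:R * p4 0 i4).
  by rewrite /tensS -!mulnb !natrM; ring.
rewrite /tpair (eq_bigr (fun i1 => p1 0 i1 * p2 0 i1 * dot p3 p4
    + p1 0 i1 * p3 0 i1 * dot p2 p4 + p1 0 i1 * p4 0 i1 * dot p2 p3)) => [|i1 _].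
  by rewrite !big_split /= -!mulr_suml.
rewrite (eq_bigr (fun i2 => p1 0 i1 * dot p3 p4 * ((i1 == i2)%:R * p2 0 i2)
    + p1 0 i1 * p3 0 i1 * (p2 0 i2 * p4 0 i2) + p1 0 i1 * p4 0 i1 * (p2 0 i2 * p3 0 i2)))
    => [|i2 _].
  by rewrite !big_split /= -!mulr_sumr sum_delta_mul /dot; ring.
rewrite (eq_bigr (fun i3 => p1 0 i1 * p2 0 i2 * (i1 == i2)%:R * (p3 0 i3 * p4 0 i3)
    + p1 0 i1 * p2 0 i2 * p4 0 i2 * ((i1 == i3)%:R * p3 0 i3)
    + p1 0 i1 * p2 0 i2 * p4 0 i1 * ((i2 == i3)%:R * p3 0 i3))) => [|i3 _].
  by rewrite !big_split /= -!mulr_sumr !sum_delta_mul /dot; ring.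
rewrite (eq_bigr (fun i4 => p1 0 i1 * p2 0 i2 * p3 0 i3 * (@tensS R K i1 i2 i3 i4 * p4 0 i4)))
    => [|i4 _]; last by ring.
rewrite -mulr_sumr (eq_bigr _ (fun i4 _ => tensS_mulr i1 i2 i3 i4)) !big_split /=.
by rewrite -!mulr_sumr !sum_delta_mul; ring.
Qed.

End Tensors.

Section OperatorNorm.
Variables (R : realType) (K : nat) (D : tensor4 R K).
Local Notation tsum := (\sum_(i1 < K) \sum_(i2 < K) \sum_(i3 < K) \sum_(i4 < K)
  `|D i1 i2 i3 i4|).

Lemma normr_tpair_le (p1 p2 p3 p4 : 'rV[R]_K) :
  `|tpair D p1 p2 p3 p4| <= tsum * (enorm p1 * enorm p2 * enorm p3 * enorm p4).
Proof.
rewrite /tpair; apply: (le_trans (ler_norm_sum _ _ _)); rewrite mulr_suml; apply: ler_sum => i1 _.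
apply: (le_trans (ler_norm_sum _ _ _)); rewrite mulr_suml; apply: ler_sum => i2 _.
apply: (le_trans (ler_norm_sum _ _ _)); rewrite mulr_suml; apply: ler_sum => i3 _.
apply: (le_trans (ler_norm_sum _ _ _)); rewrite mulr_suml; apply: ler_sum => i4 _.
rewrite !normrM -!mulrA; apply: ler_wpM2l => //.
by do 3![apply: ler_pM => //; first exact: normr_coord_le_enorm]; exact: normr_coord_le_enorm.
Qed.

Lemma tpair_le_opnorm (p1 p2 p3 p4 : 'rV[R]_K) :
  tpair D p1 p2 p3 p4 <= opnorm D * (enorm p1 * enorm p2 * enorm p3 * enorm p4).
Proof.
set P := _ * enorm p4; have P0 : 0 <= P by rewrite !mulr_ge0 // enorm_ge0.
have [Peq0|Pneq0] := eqVneq P 0.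
  by rewrite Peq0 mulr0 (le_trans (ler_norm _)) // (le_trans (normr_tpair_le _ _ _ _)) // -/P Peq0 mulr0.
have Ppos : 0 < P by rewrite lt_def Pneq0.
have ub : has_ubound [set t : R | exists u1 u2 u3 u4 : 'rV[R]_K,
    enorm u1 * enorm u2 * enorm u3 * enorm u4 = 1 /\ t = tpair D u1 u2 u3 u4].
  exists tsum => t [u1 [u2 [u3 [u4 [unit_u ->]]]]].
  by rewrite (le_trans (ler_norm _)) // (le_trans (normr_tpair_le _ _ _ _)) // unit_u mulr1.
have : tpair D (P^-1 *: p1) p2 p3 p4 <= opnorm D.
  apply: (ub_le_sup ub); exists (P^-1 *: p1), p2, p3, p4; split => //.
  rewrite enormZ ger0_norm ?invr_ge0 // -(mulVf Pneq0) /P.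
  by rewrite !mulrA.
by rewrite tpairZ1 -ler_pdivlMl ?invr_gt0 // invrK mulrC.
Qed.

Lemma normr_tpair_le_opnorm (p1 p2 p3 p4 : 'rV[R]_K) :
  `|tpair D p1 p2 p3 p4| <= opnorm D * (enorm p1 * enorm p2 * enorm p3 * enorm p4).
Proof.
rewrite ler_norml tpair_le_opnorm andbT lerNl.
have := tpair_le_opnorm ((-1) *: p1) p2 p3 p4.
by rewrite tpairZ1 enormZ normrN normr1 mul1r mulN1r.
Qed.

End OperatorNorm.

Section Objectives.
Variables (R : realType) (n m : nat) (a : 'I_m -> cvec R n) (sigma : R) (xnat : cvec R n).
Local Notation N := (n + n)%N.
Local Notation z := (vplus xnat).
Local Notation c := (cconst m sigma).
Local Notation ip i w := (dot (vplus (a i)) w).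
Implicit Types (u e w : 'rV[R]_N) (D : tensor4 R N).

(* [4 c tgrad D u e] is [<grad f(u), e>] for [D = T] and [<grad g(u), e>] for [D = S]. *)
Definition tgrad D u e : R :=
  tpair D u u u e + tpair D u u (jrot u) (jrot e) + tpair D (jrot u) (jrot u) u e
  + tpair D (jrot u) (jrot u) (jrot u) (jrot e) - tpair D z z u e
  - tpair D z z (jrot u) (jrot e) - tpair D (jrot z) (jrot z) u e
  - tpair D (jrot z) (jrot z) (jrot u) (jrot e).

Lemma tgradDZ D u k p q : tgrad D u (k *: p + q) = k * tgrad D u p + tgrad D u q.
Proof. by rewrite /tgrad jrotDZ !tpairDZ4; ring. Qed.

Lemma tgrad_tsub (D E : tensor4 R N) u e :
  tgrad (tsub D E) u e = tgrad D u e - tgrad E u e.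
Proof. by rewrite /tgrad !tpair_sub; ring. Qed.

Lemma normr_tgrad_le D u e :
  `|tgrad D u e| <= opnorm D * (4 * (enorm u ^+ 2 + enorm z ^+ 2) * enorm u * enorm e).
Proof.
have B := normr_tpair_le_opnorm D.
move: (B u u u e) (B u u (jrot u) (jrot e)) (B (jrot u) (jrot u) u e)
  (B (jrot u) (jrot u) (jrot u) (jrot e)) (B z z u e) (B z z (jrot u) (jrot e))
  (B (jrot z) (jrot z) u e) (B (jrot z) (jrot z) (jrot u) (jrot e)).
rewrite !enorm_jrot !ler_norml /tgrad => /andP[? ?] /andP[? ?] /andP[? ?] /andP[? ?]
  /andP[? ?] /andP[? ?] /andP[? ?] /andP[? ?].
by apply/andP; split; lra.
Qed.

Lemma fobjE w : fobj a xnat w =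
  \sum_(i < m) (ip i w ^+ 2 + ip i (jrot w) ^+ 2 - ymeas a xnat i) ^+ 2.
Proof. by apply: eq_bigr => i _; rewrite cabs_cinner_sqr vofplusK. Qed.

Lemma gobjE w : gobj m sigma xnat w = 8 * c *
  (dot w w ^+ 2 + dot z z ^+ 2 - (dot w z ^+ 2 + dot w (jrot z) ^+ 2) - dot w w * dot z z).
Proof.
have sqrt_pow4 (t : R) : 0 <= t -> Num.sqrt t ^+ 4 = t ^+ 2.
  by move=> t0; rewrite (_ : 4 = 2 * 2)%N // exprM sqr_sqrtr.
rewrite /gobj cabs_cinner_sqr vofplusK !cnorm_enorm vofplusK !enormE.
by rewrite !sqrt_pow4 ?dot_ge0 // !sqr_sqrtr ?dot_ge0.
Qed.

Lemma tpair_tensT p1 p2 p3 p4 : tpair (tensT a sigma) p1 p2 p3 p4 =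
  c^-1 * \sum_(i < m) ip i p1 * ip i p2 * ip i p3 * ip i p4.
Proof.
rewrite /tensT (tpairZ c^-1 (fun i1 i2 i3 i4 => \sum_(i < m)
  vplus (a i) 0 i1 * vplus (a i) 0 i2 * vplus (a i) 0 i3 * vplus (a i) 0 i4)).
by rewrite tpair_sum; congr (_ * _); apply: eq_bigr => i _; rewrite tpair_rank1.
Qed.

Lemma derive_fobj : c != 0 ->
  forall u e, 'D_e (fobj a xnat) u = 4 * c * tgrad (tensT a sigma) u e.
Proof.
move=> c0 u e; pose r i := ip i u ^+ 2 + ip i (jrot u) ^+ 2 - ymeas a xnat i.
pose s i := ip i u * ip i e + ip i (jrot u) * ip i (jrot e).
pose t i := ip i e ^+ 2 + ip i (jrot e) ^+ 2.
rewrite (@derive_quartic _ _ _ _ _ (\sum_(i < m) 4 * r i * s i)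
  (\sum_(i < m) (2 * r i * t i + 4 * s i ^+ 2)) (\sum_(i < m) 4 * s i * t i)
  (\sum_(i < m) t i ^+ 2)) => [|h]; last first.
  rewrite !fobjE !mulr_sumr -!big_split; apply: eq_bigr => i _ /=.
  by rewrite [u + _]addrC jrotDZ !dotDZr /r /s /t; ring.
rewrite /tgrad !tpair_tensT -3!mulrDr -4!mulrBr mulrA -(mulrA 4) mulfV // mulr1.
rewrite -3!big_split -4!sumrB mulr_sumr; apply: eq_bigr => i _ /=.
by rewrite /r /s /ymeas cabs_cinner_sqr; ring.
Qed.

Lemma derive_gobj u e : 'D_e (gobj m sigma xnat) u = 4 * c * tgrad (@tensS R N) u e.
Proof.
rewrite (@derive_quartic _ _ _ _ _
  (8 * c * (4 * dot u u * dot u e - 2 * dot u z * dot e z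
     - 2 * dot u (jrot z) * dot e (jrot z) - 2 * dot u e * dot z z))
  (8 * c * (4 * dot u e ^+ 2 + 2 * dot u u * dot e e - dot e z ^+ 2
     - dot e (jrot z) ^+ 2 - dot e e * dot z z))
  (8 * c * (4 * dot u e * dot e e)) (8 * c * dot e e ^+ 2)) => [|h]; last first.
  by rewrite !gobjE [u + _]addrC !dotDZl !dotDZr (dotC e u); ring.
rewrite /tgrad !tpair_tensS !dot_jrot !dot_jrotl !dot_jrot_id.
rewrite (dotC u z) (dotC e z) (dotC u (jrot z)) (dotC e (jrot z)) !dot_jrotl.
ring.
Qed.

Lemma grad_gobj_le_at_critical_fobj u : 0 < c -> grad (fobj a xnat) u = 0 ->
  enorm (grad (gobj m sigma xnat) u) ^+ 2
  <= 4 * c * (opnorm (tsub (tensT a sigma) (@tensS R N))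
     * (4 * (enorm u ^+ 2 + enorm z ^+ 2) * enorm u * enorm (grad (gobj m sigma xnat) u))).
Proof.
move=> c_gt0 crit_u; set G := grad _ u.
have scaled_tgradDZ D k p q :
    4 * c * tgrad D u (k *: p + q) = k * (4 * c * tgrad D u p) + 4 * c * tgrad D u q.
  by rewrite tgradDZ; ring.
have dotGG : dot G G = 4 * c * tgrad (@tensS R N) u G.
  exact: dot_grad (derive_gobj u) (scaled_tgradDZ _) G.
have tgradT : 4 * c * tgrad (tensT a sigma) u G = 0.
  rewrite -(dot_grad (derive_fobj (lt0r_neq0 c_gt0) u) (scaled_tgradDZ _) G) crit_u.
  by rewrite /dot big1 // => j _; rewrite mxE mul0r.
rewrite enorm_sqr dotGG.
have -> : 4 * c * tgrad (@tensS R N) u G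
    = - (4 * c * tgrad (tsub (tensT a sigma) (@tensS R N)) u G).
  by rewrite tgrad_tsub; nra.
have c4_ge0 : 0 <= 4 * c by rewrite mulr_ge0 ?ltW.
rewrite (le_trans (ler_norm _)) // normrN normrM ger0_norm //.
by rewrite ler_wpM2l // normr_tgrad_le.
Qed.

Lemma grad_gobj_lt_at_critical_fobj u delta0 : 0 < c -> xnat != 0 -> 0 < delta0 ->
  opnorm (tsub (tensT a sigma) (@tensS R N)) < delta0 -> grad (fobj a xnat) u = 0 ->
  enorm (grad (gobj m sigma xnat) u) < 16 * delta0 * c * (enorm u + enorm z) ^+ 3.
Proof.
move=> c_gt0 xnat_neq0 delta0_gt0 opnorm_lt crit_u.
have := grad_gobj_le_at_critical_fobj c_gt0 crit_u.
have := enorm_vplus_gt0 xnat_neq0; have := enorm_ge0 u.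
have := enorm_ge0 (grad (gobj m sigma xnat) u); move: opnorm_lt.
set om := opnorm _; set g := enorm _; set U := enorm u; set Z := enorm z.
move=> om_lt g_ge0 U_ge0 Z_gt0 g_sqr_le.
have cubic_ge0 : 0 <= (U ^+ 2 + Z ^+ 2) * U by rewrite mulr_ge0 // addr_ge0 ?sqr_ge0.
have cubic_lt : (U ^+ 2 + Z ^+ 2) * U < (U + Z) ^+ 3.
  have := mulr_ge0 U_ge0 (ltW Z_gt0); have := exprn_gt0 3 Z_gt0; nra.
have bound_gt0 : 0 < 16 * delta0 * c * (U + Z) ^+ 3.
  have := le_lt_trans cubic_ge0 cubic_lt; have := mulr_gt0 delta0_gt0 c_gt0; nra.
have [g_eq0|g_neq0] := eqVneq g 0; first by rewrite g_eq0.
have g_gt0 : 0 < g by rewrite lt_def g_neq0.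
have g_le : g <= 4 * c * (om * (4 * (U ^+ 2 + Z ^+ 2) * U)).
  by rewrite -(ler_pM2r g_gt0) -expr2 -!mulrA; rewrite -!mulrA in g_sqr_le.
have ccubic_ge0 := mulr_ge0 (ltW c_gt0) cubic_ge0.
have [om_le0|om_gt0] := lerP om 0; first nra.
have : om * ((U ^+ 2 + Z ^+ 2) * U) < delta0 * (U + Z) ^+ 3 by nra.
nra.
Qed.

End Objectives.

Theorem proposition3 (R : realType) :
  exists C1 : R, 0 < C1 /\
  forall (delta0 : R), 0 < delta0 ->
  forall (n m : nat) (a : 'I_m -> cvec R n) (xnat : cvec R n) (sigma : R),
    (1 <= n)%N -> (1 <= m)%N -> xnat != 0 -> 0 < sigma ->
    opnorm (tsub (tensT a sigma) (@tensS R (n + n)%N)) < delta0 ->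
    forall x : cvec R n,
      C1 * delta0 * cconst m sigma * (cnorm x + cnorm xnat) ^+ 3
        <= enorm (grad (gobj m sigma xnat) (vplus x)) ->
      grad (fobj a xnat) (vplus x) != 0.
Proof.
exists 16; split; first lra.
move=> delta0 delta0_gt0 n m a xnat sigma _ m_gt0 xnat_neq0 sigma_gt0 opnorm_lt
  x grad_g_ge; apply/eqP => crit_x.
have c_gt0 : 0 < cconst m sigma by rewrite mulr_gt0 ?ltr0n ?exprn_gt0.
have := grad_gobj_lt_at_critical_fobj c_gt0 xnat_neq0 delta0_gt0 opnorm_lt crit_x.
by rewrite -!cnorm_enorm ltNge grad_g_ge.
Qed.
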